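(* Let $\mathcal{A}$ be a pOC with state set $Q$ and let $p,q\in Q$ be such that $[p{\downarrow}q]>0$ and $q$ is not in a bottom strongly connected component of $\mathcal{X}$. Then $$E(p{\downarrow}q)\le \frac{5|Q|}{x_{\min}^{|Q|+|Q|^3}}.$$
   Context: A pOC is $\mathcal{A}=(Q,\delta^{=0},\delta^{>0},P^{=0},P^{>0})$ with the following components. - $Q$ is a finite set of states. - $\delta^{>0}\subseteq Q\times\{-1,0,1\}\times Q$ is the set of positive rules and $\delta^{=0}\subseteq Q\times\{0,1\}\times Q$ is the set of zero rules. Every state has an outgoing positive rule and an outgoing zero rule. - $P^{>0}$ and $P^{=0}$ assign to each state a positive rational probability distribution over its outgoing positive rules and over its outgoing zero rules, respectively. The Markov chain $\mathcal{M}_\mathcal{A}$ on configurations $p(i)$ has the following transitions: - $p(0)\to q(c)$ with probability $P^{=0}(p,c,q)$; - for $i\ge1$, $p(i)\to q(i+c)$ with probability $P^{>0}(p,c,q)$. $\mathrm{Run}(p{\downarrow}q)$ is the set of runs from $p(1)$ that visit $q(0)$ with the counter positive before that visit, and $[p{\downarrow}q]$ is its probability. $E(p{\downarrow}q)$ is the conditional expected number of transitions until the first visit of $q(0)$, given $\mathrm{Run}(p{\downarrow}q)$. $\mathcal{X}$ is the underlying finite Markov chain of $\mathcal{A}$. Its state set is $Q$ and its transition matrix is $A$ with $A_{pq}=\sum_{c}P^{>0}(p,c,q)$. $x_{\min}$ is the least positive probability used in the rules of $\mathcal{A}$. *)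

From HB Require Import structures.
From mathcomp Require Import all_boot all_order all_algebra.
From mathcomp Require Import all_classical all_reals all_analysis.
Set Implicit Arguments. Unset Strict Implicit. Unset Printing Implicit Defensive.
Import Order.TTheory GRing.Theory Num.Theory.
Local Open Scope ring_scope.

Definition pos_moves : seq int := [:: -1; 0; 1].
Definition zero_moves : seq int := [:: 0; 1].

(* Pp s c t = P^{>0}(s,c,t), Pz s c t = P^{=0}(s,c,t); the rule sets
   delta^{>0}, delta^{=0} are the supports of Pp and Pz. *)
Record pOC (Q : finType) := POC {
  Pp : Q -> int -> Q -> rat;
  Pz : Q -> int -> Q -> rat;
  Pp_ge0 : forall s c t, 0 <= Pp s c t;
  Pz_ge0 : forall s c t, 0 <= Pz s c t;
  Pp_supp : forall s c t, Pp s c t != 0 -> c \in pos_moves;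
  Pz_supp : forall s c t, Pz s c t != 0 -> c \in zero_moves;
  Pp_sum : forall s, \sum_(c <- pos_moves) \sum_(t : Q) Pp s c t = 1;
  Pz_sum : forall s, \sum_(c <- zero_moves) \sum_(t : Q) Pz s c t = 1
}.

Section POC.
Variables (Q : finType) (A : pOC Q).

Definition pos_rule s c t := 0 < Pp A s c t.
Definition zero_rule s c t := 0 < Pz A s c t.

(* x_min: least positive probability used in the rules of A
   (all probabilities are <= 1, so 1 is a neutral default). *)
Definition xmin : rat :=
  Num.min
    (\big[Num.min/1]_(s : Q) \big[Num.min/1]_(t : Q) \big[Num.min/1]_(c <- pos_moves)
        (if 0 < Pp A s c t then Pp A s c t else 1))
    (\big[Num.min/1]_(s : Q) \big[Num.min/1]_(t : Q) \big[Num.min/1]_(c <- zero_moves)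
        (if 0 < Pz A s c t then Pz A s c t else 1)).

Definition Xmat (s t : Q) : rat := \sum_(c <- pos_moves) Pp A s c t.
Definition Xedge : rel Q := fun s t => 0 < Xmat s t.

Definition in_BSCC (q : Q) : bool :=
  [forall r, connect Xedge q r ==> connect Xedge r q].

(* hit q n s i = probability that the run of M_A from s(i) visits q(0) at step
   exactly n, with the counter positive at all steps before n.  Before that
   visit only positive rules are used. *)
Fixpoint hit (q : Q) (n : nat) (s : Q) (i : int) : rat :=
  match n with
  | 0 => ((s == q) && (i == 0))%:R
  | n'.+1 => if 0 < i then
               \sum_(c <- pos_moves) \sum_(t : Q) Pp A s c t * hit q n' t (i + c)
             else 0
  end.

Local Open Scope ereal_scope.

(* [p down q]: probability of Run(p down q) (a disjoint union over the
   step n of the first visit to q(0)). *)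
Definition prob_down {R : realType} (p q : Q) : \bar R :=
  \sum_(0 <= n <oo) (ratr (hit q n p 1) : R)%:E.

Definition exp_down {R : realType} (p q : Q) : \bar R :=
  (\sum_(0 <= n <oo) ((n%:R * ratr (hit q n p 1)) : R)%:E)
  * ((fine (prob_down p q))^-1)%:E.

End POC.

(* The expected time E(p down q) is the unnormalised expected hitting time of
   q(0) divided by [p down q]; both are bounded separately (x = x_min).

   Before hitting q(0) a run only visits states of X from which q is
   reachable.  Since q is not in a bottom SCC, from every such state a path of
   length < |Q| in X leaves this set, so staying in it for |Q| more steps has
   probability at most 1 - x^|Q|; summing the geometric tail bounds the
   unnormalised expected hitting time by |Q| / x^|Q|.

   For [p down q] >= x^(|Q|^3), take a shortest descent from p(1) to q(0).
   Its counter height can be chosen at most the number of state pairs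
   admitting a descent, hence at most |Q|^2; after removing loops its run
   visits distinct configurations of bounded height, so it has at most |Q|^3
   steps, each of probability at least x. *)

From HB Require Import structures.
From mathcomp Require Import all_boot all_order all_algebra.
From mathcomp Require Import all_classical all_reals all_analysis.
From mathcomp Require Import lra zify.
Set Implicit Arguments. Unset Strict Implicit. Unset Printing Implicit Defensive.
Import Order.TTheory GRing.Theory Num.Theory.
Local Open Scope ring_scope.

Lemma psumr_gt0P (R : numDomainType) (I : eqType) (r : seq I) (F : I -> R) :
  (forall i, 0 <= F i) -> 0 < \sum_(i <- r) F i -> exists2 i, i \in r & 0 < F i.
Proof. by move=> F0 /gt_eqF/negbT; rewrite psumr_neq0 // => /hasP. Qed.

Lemma sumr_geom_le (R : realFieldType) (r : R) n :
  0 <= r < 1 -> \sum_(i < n) r ^+ i <= (1 - r)^-1.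
Proof.
case/andP=> r0 r1; have r1' : 0 < 1 - r by rewrite subr_gt0.
have -> : (1 - r)^-1 = 1 / (1 - r) by rewrite mul1r.
rewrite ler_pdivlMr // mulrC -opprB mulNr -subrX1 opprB lerBlDr lerDl.
exact: exprn_ge0.
Qed.

Lemma ler_pdivr_expD (R : realFieldType) (y a b c : R) (m n : nat) :
  0 < y -> 0 <= a -> a <= c / y ^+ m -> y ^+ n <= b -> a / b <= c / y ^+ (m + n).
Proof.
move=> y0 a0 ac yb; have yn0 : 0 < y ^+ n by rewrite exprn_gt0.
apply: le_trans (_ : a / y ^+ n <= _).
  by rewrite ler_wpM2l // lef_pV2 ?posrE // (lt_le_trans yn0).
by rewrite exprD invfM mulrA ler_wpM2r // invr_ge0 ltW.
Qed.

Local Open Scope ereal_scope.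

Lemma nneseries_le_bound (R : realType) (u : nat -> R) (B : R) :
  (forall n, (0 <= u n)%R) -> (forall N, (\sum_(0 <= n < N) u n <= B)%R) ->
  \sum_(0 <= n <oo) (u n)%:E <= B%:E.
Proof.
move=> u0 uB; apply: lime_le; first by apply: is_cvg_nneseries => n _ _; rewrite lee_fin.
by apply: nearW => N; rewrite sumEFin lee_fin.
Qed.

Lemma nneseries_ge_term (R : realType) (u : nat -> R) m :
  (forall n, (0 <= u n)%R) -> (u m)%:E <= \sum_(0 <= n <oo) (u n)%:E.
Proof.
move=> u0; apply: le_trans (nneseries_lim_ge m.+1 _); last by move=> n _ _; rewrite lee_fin.
by rewrite big_nat_recr //= sumEFin -EFinD lee_fin lerDr sumr_ge0.
Qed.

Lemma fineK_bounded (R : realType) (x : \bar R) (b : R) :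
  0 <= x -> x <= b%:E -> (fine x)%:E = x.
Proof. by move=> x0 xb; rewrite fineK // ge0_fin_numE // (le_lt_trans xb) ?ltry. Qed.

Local Close Scope ereal_scope.

Section XMin.
Variables (Q : finType) (A : pOC Q).

Lemma xmin_gt0 : 0 < xmin A.
Proof.
by rewrite /xmin lt_min; apply/andP; split;
  do 3 (apply: lt_bigmin => // ? _); case: ifP.
Qed.

Lemma xmin_le1 : xmin A <= 1.
Proof. by rewrite /xmin ge_min bigmin_le_id. Qed.

Lemma xmin_le_Pp s c t : 0 < Pp A s c t -> xmin A <= Pp A s c t.
Proof.
move=> Ppos; have cm : c \in pos_moves by rewrite (Pp_supp (lt0r_neq0 Ppos)).
rewrite /xmin ge_min; apply/orP; left.
apply: le_trans (bigmin_le _ s _) _; apply: le_trans (bigmin_le _ t _) _.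
by apply: (bigmin_inf_seq _ c) => //; rewrite Ppos.
Qed.

Lemma Xmat_ge0 s t : 0 <= Xmat A s t.
Proof. by apply: sumr_ge0 => c _; exact: Pp_ge0. Qed.

Lemma sum_Xmat s : \sum_t Xmat A s t = 1.
Proof. by rewrite /Xmat exchange_big /= Pp_sum. Qed.

Lemma Xedge_Pp s c t : 0 < Pp A s c t -> Xedge A s t.
Proof.
move=> Ppos; have cm : c \in pos_moves by rewrite (Pp_supp (lt0r_neq0 Ppos)).
rewrite /Xedge /Xmat (bigD1_seq c) //=; apply: ltr_wpDr => //.
by apply: sumr_ge0 => c' _; exact: Pp_ge0.
Qed.

Lemma xmin_le_Xmat s t : Xedge A s t -> xmin A <= Xmat A s t.
Proof.
move=> Xst; have [c cm /xmin_le_Pp xmin_le] := psumr_gt0P (Pp_ge0 A s ^~ t) Xst.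
apply: le_trans xmin_le _.
by rewrite /Xmat (bigD1_seq c) //= lerDl; apply: sumr_ge0 => c' _; exact: Pp_ge0.
Qed.

End XMin.

Section Hit.
Variables (Q : finType) (A : pOC Q) (q : Q).

Lemma hit_ge0 n s i : 0 <= hit A q n s i.
Proof.
elim: n s i => [|n IH] s i /=; first by rewrite ler0n.
case: ifP => // _; apply: sumr_ge0 => c _; apply: sumr_ge0 => t _.
by rewrite mulr_ge0 ?Pp_ge0.
Qed.

Lemma hitS_gt0P n s i : 0 < hit A q n.+1 s i ->
  0 < i /\ exists c t, [/\ c \in pos_moves, 0 < Pp A s c t & 0 < hit A q n t (i + c)].
Proof.
rewrite /=; case: ifP => [i0 Hpos|_]; last by rewrite ltxx.
have T0 c t : 0 <= Pp A s c t * hit A q n t (i + c) by rewrite mulr_ge0 ?Pp_ge0 ?hit_ge0.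
have [c cm /(psumr_gt0P (T0 c)) [t _]] :=
  psumr_gt0P (fun c => sumr_ge0 _ (fun t _ => T0 c t)) Hpos.
by rewrite mulr_ge0_gt0 ?Pp_ge0 ?hit_ge0 // => /andP [Pst Ht]; split; last by exists c, t.
Qed.

Lemma hit_gt0_connect n s i : 0 < hit A q n s i -> connect (Xedge A) s q.
Proof.
elim: n s i => [|n IH] s i /=.
  by case: (eqVneq s q) => [-> _|_]; [exact: connect0|rewrite ltxx].
move=> /hitS_gt0P [_ [c [t [_ Pst /IH]]]].
exact/connect_trans/connect1/(Xedge_Pp Pst).
Qed.

Lemma sum_hitS N s i (F : nat -> nat) :
  \sum_(0 <= m < N) hit A q (F m).+1 s i =
  if 0 < i then \sum_(c <- pos_moves) \sum_t Pp A s c t *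
                   \sum_(0 <= m < N) hit A q (F m) t (i + c) else 0.
Proof.
case: ifP => i0; last by rewrite big1 // => m _ /=; rewrite i0.
under eq_bigr do rewrite /= i0.
rewrite exchange_big; apply: eq_bigr => c _.
rewrite exchange_big; apply: eq_bigr => t _.
by rewrite mulr_sumr.
Qed.

Lemma sum_hit_le1 N s i : \sum_(0 <= m < N) hit A q m s i <= 1.
Proof.
elim: N s i => [|N IH] s i; first by rewrite big_geq.
rewrite big_nat_recl // (sum_hitS N s i id) /=.
case: ifP => [i0|_]; last by rewrite addr0; case: (_ && _).
rewrite (negbTE (lt0r_neq0 i0)) andbF add0r -(Pp_sum A s).
apply: ler_sum => c _; apply: ler_sum => t _.
by rewrite -[X in _ <= X]mulr1 ler_wpM2l ?Pp_ge0.
Qed.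

End Hit.

Section Survival.
Variables (Q : finType) (A : pOC Q) (q : Q).

Definition reaches s := connect (Xedge A) s q.

Fixpoint surv n s : rat :=
  match n with
  | 0 => (reaches s)%:R
  | n'.+1 => (reaches s)%:R * \sum_t Xmat A s t * surv n' t
  end.

Lemma surv0 s : surv 0 s = (reaches s)%:R.
Proof. by []. Qed.

Lemma survS n s : surv n.+1 s = (reaches s)%:R * \sum_t Xmat A s t * surv n t.
Proof. by []. Qed.

Lemma surv_ge0 n s : 0 <= surv n s.
Proof.
elim: n s => [|n IH] s /=; first exact: ler0n.
by rewrite mulr_ge0 ?ler0n //; apply: sumr_ge0 => t _; rewrite mulr_ge0 ?Xmat_ge0.
Qed.

Lemma surv_le1 n s : surv n s <= 1.
Proof.
elim: n s => [|n IH] s /=; first by case: (reaches s).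
rewrite -[1](mul1r 1); apply: ler_pM; rewrite ?ler0n //.
- by apply: sumr_ge0 => t _; rewrite mulr_ge0 ?Xmat_ge0 ?surv_ge0.
- by case: (reaches s).
rewrite -(sum_Xmat A s); apply: ler_sum => t _.
by rewrite -[X in _ <= X]mulr1 ler_wpM2l ?Xmat_ge0.
Qed.

Lemma surv_unreach n s : ~~ reaches s -> surv n s = 0.
Proof. by case: n => [|n] /= /negbTE ->; rewrite ?mul0r. Qed.

Lemma surv_shift m c : 0 <= c -> (forall t, surv m t <= c * surv 0 t) ->
  forall n s, surv (n + m) s <= c * surv n s.
Proof.
move=> c0 Hm; elim=> [|n IH] s; first exact: Hm.
rewrite addSn /= mulrCA ler_wpM2l ?ler0n // mulr_sumr ler_sum // => t _.
by rewrite mulrCA ler_wpM2l ?Xmat_ge0.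
Qed.

Lemma surv_leD r n s : surv (r + n) s <= surv n s.
Proof.
elim: r => // r IH; apply: le_trans IH.
rewrite addSn -addn1 -[X in _ <= X]mul1r; apply: surv_shift => // t.
rewrite survS surv0 mul1r -[X in _ <= X]mulr1 ler_wpM2l ?ler0n //.
rewrite -[X in _ <= X](sum_Xmat A t); apply: ler_sum => t' _.
by rewrite -[X in _ <= X]mulr1 ler_wpM2l ?Xmat_ge0 ?surv_le1.
Qed.

Lemma surv_path_exit t pth : path (Xedge A) t pth -> ~~ reaches (last t pth) ->
  surv (size pth) t <= 1 - xmin A ^+ size pth.
Proof.
elim: pth t => [|t1 pth IH] t /=; first by move=> _ /negbTE ->; rewrite expr0 subrr.
case/andP => e pth_ok /(IH _ pth_ok) Ht1; set n := size pth in Ht1 *.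
have x0 := xmin_gt0 A.
have Hsum : \sum_t' Xmat A t t' * surv n t' <= 1 - xmin A ^+ n.+1.
  have S1 := sum_Xmat A t; rewrite (bigD1 t1) //= in S1; rewrite (bigD1 t1) //=.
  have L1 : \sum_(i | i != t1) Xmat A t i * surv n i <= \sum_(i | i != t1) Xmat A t i.
    by apply: ler_sum => i _; rewrite -[X in _ <= X]mulr1 ler_wpM2l ?Xmat_ge0 ?surv_le1.
  have L2 : Xmat A t t1 * surv n t1 <= Xmat A t t1 * (1 - xmin A ^+ n).
    by rewrite ler_wpM2l ?Xmat_ge0.
  have L3 : xmin A * xmin A ^+ n <= Xmat A t t1 * xmin A ^+ n.
    by rewrite ler_wpM2r ?exprn_ge0 ?(ltW x0) ?xmin_le_Xmat.
  rewrite exprS; clear -S1 L1 L2 L3; lra.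
case: (reaches t) => /=; rewrite ?mul1r // mul0r subr_ge0.
by rewrite exprn_ile1 ?(ltW x0) ?xmin_le1.
Qed.

Lemma surv_card_le t : reaches t -> ~~ in_BSCC A q ->
  surv #|Q| t <= 1 - xmin A ^+ #|Q|.
Proof.
move=> Rt /forallPn [r]; rewrite negb_imply => /andP [qr nrq].
have /connectP [pth pth_ok r_last] := connect_trans Rt qr.
case: (shortenP pth_ok) r_last => p' p'_ok p'_uniq _ r_last.
have x0 := xmin_gt0 A.
have size_p' : (size p' < #|Q|)%N.
  by have := max_card (mem (t :: p')); rewrite (card_uniqP p'_uniq).
apply: le_trans (_ : surv (size p') t <= _).
  by rewrite -(subnK (ltnW size_p')); exact: surv_leD.
apply: le_trans (surv_path_exit p'_ok _) _; first by rewrite -r_last.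
by rewrite lerD2l lerN2 ler_wiXn2l ?(ltW x0) ?xmin_le1 // ltnW.
Qed.

Lemma surv_decay j s : ~~ in_BSCC A q ->
  surv (j * #|Q|) s <= (1 - xmin A ^+ #|Q|) ^+ j.
Proof.
move=> nb; have x0 := xmin_gt0 A.
have rho0 : 0 <= 1 - xmin A ^+ #|Q| by rewrite subr_ge0 exprn_ile1 ?(ltW x0) ?xmin_le1.
have Hk t : surv #|Q| t <= (1 - xmin A ^+ #|Q|) * surv 0 t.
  case Rt : (reaches t); last by rewrite surv_unreach ?Rt // surv0 Rt mulr0.
  by rewrite surv0 Rt mulr1 surv_card_le ?Rt.
elim: j s => [|j IH] s; first by rewrite mul0n expr0 surv_le1.
rewrite mulSn addnC exprS; apply: le_trans (surv_shift rho0 Hk _ _) _.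
by rewrite ler_wpM2l.
Qed.

(* Blocks of #|Q| consecutive indices have total weight at most
   #|Q| * rho ^+ j, and the geometric series of rho := 1 - xmin ^+ #|Q| sums
   to xmin ^- #|Q|. *)
Lemma sum_surv_le N s : ~~ in_BSCC A q ->
  \sum_(0 <= n < N) surv n s <= #|Q|%:R / xmin A ^+ #|Q|.
Proof.
move=> nb; set k := #|Q|; set rho := 1 - xmin A ^+ k.
have x0 := xmin_gt0 A.
have k0 : (0 < k)%N by apply/card_gt0P; exists s.
have rho01 : 0 <= rho < 1.
  by rewrite subr_ge0 gtrDl oppr_lt0 exprn_gt0 // exprn_ile1 ?(ltW x0) ?xmin_le1.
have blocks J : \sum_(0 <= n < J * k) surv n s <= k%:R * \sum_(j < J) rho ^+ j.
  elim: J => [|J IH]; first by rewrite mul0n big_geq // big_ord0 mulr0.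
  rewrite (big_cat_nat (n := J * k)) //=; last by rewrite leq_mul2r leqnSn orbT.
  rewrite big_ord_recr /= mulrDr lerD //.
  rewrite -[X in \sum_(X <= _ < _) _](add0n (J * k)) big_addn.
  apply: le_trans (_ : \sum_(0 <= i < J.+1 * k - J * k) rho ^+ J <= _).
    by apply: ler_sum => i _; apply: le_trans (surv_leD _ _ _) _; exact: surv_decay.
  by rewrite sumr_const_nat subn0 mulSn addnK mulr_natl.
apply: le_trans (_ : \sum_(0 <= n < N * k) surv n s <= _).
  rewrite [X in _ <= X](big_cat_nat (n := N)) //= ?leq_pmulr // lerDl.
  by apply: sumr_ge0 => i _; exact: surv_ge0.
apply: le_trans (blocks N) _; rewrite ler_wpM2l ?ler0n //.
have -> : xmin A ^+ k = 1 - rho by rewrite /rho opprB addrC subrK.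
exact: sumr_geom_le.
Qed.

Lemma hit_unreach n s i : ~~ reaches s -> hit A q n s i = 0.
Proof.
move=> nR; apply/eqP; rewrite eq_le hit_ge0 andbT leNgt.
by apply: contra nR; exact: hit_gt0_connect.
Qed.

Lemma sum_hit_tail_le N n s i : \sum_(0 <= m < N) hit A q (m + n) s i <= surv n s.
Proof.
case Rs : (reaches s); last first.
  by rewrite big1 ?surv_unreach ?Rs // => m _; rewrite hit_unreach ?Rs.
elim: n s i Rs => [|n IH] s i Rs.
  by rewrite surv0 Rs; under eq_bigr do rewrite addn0; exact: sum_hit_le1.
under eq_bigr do rewrite addnS.
rewrite (sum_hitS A q N s i (addn^~ n)) survS Rs mul1r.
case: ifP => _; last by apply: sumr_ge0 => t _; rewrite mulr_ge0 ?Xmat_ge0 ?surv_ge0.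
rewrite /Xmat; under [X in _ <= X]eq_bigr do rewrite mulr_suml.
rewrite [X in _ <= X]exchange_big /=; apply: ler_sum => c _; apply: ler_sum => t _.
rewrite ler_wpM2l ?Pp_ge0 //; case Rt : (reaches t); first exact: IH.
by rewrite big1 ?surv_unreach ?Rt // => m _; rewrite hit_unreach ?Rt.
Qed.

(* Writing m * hit m as a sum of m copies and exchanging the sums turns the
   expected hitting time into a sum of tail probabilities. *)
Lemma sum_time_hit_le N s i : ~~ in_BSCC A q ->
  \sum_(0 <= m < N) m%:R * hit A q m s i <= #|Q|%:R / xmin A ^+ #|Q|.
Proof.
move=> nb.
have -> : \sum_(0 <= m < N) m%:R * hit A q m s i =
          \sum_(0 <= n < N) \sum_(n.+1 <= m < N) hit A q m s i.
  have E m : (0 <= m < N)%N ->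
      m%:R * hit A q m s i = \sum_(0 <= n < N) if (n < m)%N then hit A q m s i else 0.
    case/andP=> _ mN; rewrite mulr_natl -[m in _ *+ m]subn0 -sumr_const_nat.
    by rewrite (big_nat_widen _ _ _ _ _ (ltnW mN)) big_mkcond.
  rewrite (eq_big_nat _ _ E) exchange_big_nat; apply: eq_bigr => n _.
  by rewrite -big_mkcond (big_nat_widenl _ _ _ _ _ (leq0n n.+1)).
apply: le_trans (_ : \sum_(0 <= n < N) surv n.+1 s <= _).
  apply: ler_sum => n _.
  rewrite -[X in \sum_(X <= _ < _) _](add0n n.+1) big_addn.
  apply: le_trans (sum_hit_tail_le N _ _ i).
  rewrite [X in _ <= X](big_cat_nat (n := N - n.+1)) ?leq_subr //= lerDl.
  by apply: sumr_ge0 => j _; exact: hit_ge0.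
apply: le_trans (sum_surv_le N.+1 s nb).
by rewrite big_nat_recl // lerDr surv_ge0.
Qed.

End Survival.

Section Descents.
Variables (Q : finType) (A : pOC Q).

(* [descent s t n h]: a run of n positive steps from s(i) to t(i - 1) whose
   counter stays >= i before the last step and <= i - 1 + h throughout. *)
Inductive descent : Q -> Q -> nat -> nat -> Prop :=
| descent_down s t h :
    0 < Pp A s (-1) t -> (0 < h)%N -> descent s t 1 h
| descent_flat s s' t n h :
    0 < Pp A s 0 s' -> descent s' t n h -> descent s t n.+1 h
| descent_up s s' u t n1 n2 h1 h :
    0 < Pp A s 1 s' -> descent s' u n1 h1 -> descent u t n2 h -> (h1 < h)%N ->
    descent s t (n1 + n2).+1 h.

Inductive descents : Q -> nat -> Q -> nat -> Prop :=
| descents0 s : descents s 0 s 0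
| descentsS s u t k n1 n2 h :
    descent s u n1 h -> descents u k t n2 -> descents s k.+1 t (n1 + n2).

Lemma descent_height_gt0 s t n h : descent s t n h -> (0 < h)%N.
Proof. by elim=> // *; apply: leq_ltn_trans (leq0n _) _; eauto. Qed.

Lemma descent_widen s t n h h' : descent s t n h -> (h <= h')%N -> descent s t n h'.
Proof.
move=> D; elim: D h' => {s t n h}
  [s t h P h0|s s' t n h P _ IH|s s' u t n1 n2 h1 h P D1 _ _ IH2 lt] h' hh'.
- exact/descent_down/(leq_trans h0 hh').
- exact/(descent_flat P)/IH.
- exact: descent_up P D1 (IH2 _ hh') (leq_trans lt hh').
Qed.

Lemma descents0_inv s t n : descents s 0 t n -> s = t /\ n = 0%N.
Proof. by move=> D; inversion D. Qed.

Lemma descentsS_inv s k t n : descents s k.+1 t n ->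
  exists u n1 n2 h, [/\ descent s u n1 h, descents u k t n2 & n = (n1 + n2)%N].
Proof. by move=> D; inversion D; subst; do 4 eexists; split; eauto. Qed.

(* Case analysis on the first step: a +1 step is followed by k + 1 descents,
   the first of which (lifted in height) nests inside the new descent. *)
Lemma hit_descents q n s (k : nat) : 0 < hit A q n s k%:Z -> descents s k q n.
Proof.
elim: n s k => [|n IH] s k /=.
  case: (eqVneq s q) => [-> | _]; last by rewrite ltxx.
  by case: k => [|k] //= _; exact: descents0.
move=> /hitS_gt0P [+ [c [t [cm Pst]]]]; case: k => [|k] // _.
move: cm Pst; rewrite !inE => /or3P [] /eqP -> Pst Ht.
- rewrite (_ : k.+1%:Z + -1 = k%:Z) in Ht; last by lia.
  by have := descentsS (descent_down Pst (ltn0Sn 0)) (IH _ _ Ht); rewrite add1n.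
- rewrite addr0 in Ht; have [u [n1 [n2 [h [D1 D2 ->]]]]] := descentsS_inv (IH _ _ Ht).
  by have := descentsS (descent_flat Pst D1) D2; rewrite addSn.
- rewrite (_ : k.+1%:Z + 1 = k.+2%:Z) in Ht; last by lia.
  have [u [n1 [n2 [h [D1 D2 ->]]]]] := descentsS_inv (IH _ _ Ht).
  have [v [m1 [m2 [g [G1 G2 ->]]]]] := descentsS_inv D2.
  have D := descent_up Pst D1 (descent_widen G1 (leq_maxr h.+1 g)) (leq_maxl h.+1 g).
  by have := descentsS D G2; rewrite addnA addSn.
Qed.

Lemma hit_descent q n s : 0 < hit A q n s 1 -> exists h, descent s q n h.
Proof.
move/(hit_descents (k := 1)) => /descentsS_inv [u [n1 [n2 [h [D /descents0_inv [<- ->] ->]]]]].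
by exists h; rewrite addn0.
Qed.

Definition descent_pairs n : {set Q * Q} :=
  [set x | `[< exists m h, (m <= n)%N /\ descent x.1 x.2 m h >]].

Lemma descent_pairsP x n :
  reflect (exists m h, (m <= n)%N /\ descent x.1 x.2 m h) (x \in descent_pairs n).
Proof. by rewrite inE; apply: (iffP idP) => /asboolP. Qed.

Lemma descent_pairsS n n' : (n <= n')%N -> descent_pairs n \subset descent_pairs n'.
Proof.
move=> nn'; apply/fintype.subsetP => x /descent_pairsP [m [h [mn D]]].
by apply/descent_pairsP; exists m, h; split => //; exact: leq_trans nn'.
Qed.

Lemma card_descent_pairs n : (#|descent_pairs n| <= #|Q| ^ 2)%N.
Proof. by apply: leq_trans (max_card _) _; rewrite card_prod. Qed.

Definition shortest_descent s t n := forall m h, (m < n)%N -> ~ descent s t m h.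

(* In a shortest descent from s to t of length n, the inner descent of an
   up-step has length n1 < n; as (s, t) is in descent_pairs n but not in
   descent_pairs n1, its height bound #|descent_pairs n1| is strictly below
   #|descent_pairs n|. *)
Lemma shortest_descent_height n s t h : descent s t n h -> shortest_descent s t n ->
  exists2 h', descent s t n h' & (h' <= #|descent_pairs n|)%N.
Proof.
elim/ltn_ind: n s t h => n IHn s t h D; move: IHn; case: D.
- move=> {}s {}t {}h P h0 _ _; exists 1%N; first exact: descent_down.
  apply/card_gt0P; exists (s, t); apply/descent_pairsP; exists 1%N, h.
  by split=> //; exact: descent_down.
- move=> {}s s' {}t k {}h P D IHn Dmin.
  have [g G gb] : exists2 g, descent s' t k g & (g <= #|descent_pairs k|)%N.
    apply: (IHn k (ltnSn k) _ _ _ D) => m h' lt D'.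
    exact: (Dmin m.+1 h') (descent_flat P D').
  exists g; first exact: descent_flat P G.
  by apply: leq_trans gb _; apply/subset_leq_card/descent_pairsS.
- move=> {}s s' u {}t n1 n2 h1 {}h P D1 D2 lt IHn Dmin.
  have [g1 G1 gb1] : exists2 g, descent s' u n1 g & (g <= #|descent_pairs n1|)%N.
    apply: (IHn n1 _ _ _ _ D1); first by rewrite ltnS leq_addr.
    move=> m h' lm D'; apply: (Dmin (m + n2).+1 (maxn h'.+1 h)).
      by rewrite ltnS ltn_add2r.
    exact: descent_up P D' (descent_widen D2 (leq_maxr _ _)) (leq_maxl _ _).
  have [g2 G2 gb2] : exists2 g, descent u t n2 g & (g <= #|descent_pairs n2|)%N.
    apply: (IHn n2 _ _ _ _ D2); first by rewrite ltnS leq_addl.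
    move=> m h' lm D'; apply: (Dmin (n1 + m).+1 (maxn h1.+1 h')).
      by rewrite ltnS ltn_add2l.
    exact: descent_up P D1 (descent_widen D' (leq_maxr _ _)) (leq_maxl _ _).
  exists (maxn g1.+1 g2).
    exact: descent_up P G1 (descent_widen G2 (leq_maxr _ _)) (leq_maxl _ _).
  rewrite geq_max; apply/andP; split.
    apply: leq_ltn_trans gb1 _; apply/proper_card/properP; split.
      by apply: descent_pairsS; lia.
    exists (s, t).
      apply/descent_pairsP; exists (n1 + n2).+1, h.
      by split => //; exact: descent_up P D1 D2 lt.
    apply/descent_pairsP => -[m [h' [lm D']]]; apply: (Dmin m h') D'.
    by apply: leq_ltn_trans lm _; rewrite ltnS leq_addr.
  by apply: leq_trans gb2 _; apply/subset_leq_card/descent_pairsS; lia.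
Qed.

Definition conf_step : rel (Q * int) :=
  fun x y => (0 < x.2) && (0 < Pp A x.1 (y.2 - x.2) y.1).

Lemma descent_run s t n h : descent s t n h -> forall i : int, 0 < i ->
  exists cs, [/\ size cs = n, path conf_step (s, i) cs, last (s, i) cs = (t, i - 1)
    & all (fun y : Q * int => y.2 <= i - 1 + h%:Z) cs].
Proof.
elim=> {s t n h} [s t h P h0|s s' t n h P D IH|s s' u t n1 n2 h1 h P D1 IH1 D2 IH2 lt] i i0.
- exists [:: (t, i - 1)]; split => //=.
    by rewrite /conf_step /= i0 andbT; have -> : i - 1 - i = -1 by lia.
  by rewrite andbT; lia.
- have [cs [size_cs run_cs last_cs all_cs]] := IH i i0.
  have h0 := descent_height_gt0 D.
  exists ((s', i) :: cs); split => //=; first by rewrite size_cs.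
    by rewrite /conf_step /= i0 subrr P.
  by rewrite all_cs andbT; lia.
- have [cs1 [size1 run1 last1 all1]] := IH1 (i + 1) ltac:(lia).
  have [cs2 [size2 run2 last2 all2]] := IH2 i i0.
  have g0 := descent_height_gt0 D1.
  rewrite (_ : i + 1 - 1 = i) in last1; last by lia.
  exists ((s', i + 1) :: cs1 ++ cs2); split => /=.
  + by rewrite size_cat size1 size2.
  + rewrite cat_path run1 last1 run2 /conf_step /= i0 andbT andTb.
    by have -> : i + 1 - i = 1 by lia.
  + by rewrite last_cat last1.
  + rewrite all_cat all2 andbT; apply/andP; split; first lia.
    by apply/allP => y /(allP all1); lia.
Qed.

Lemma conf_step_path_pos x cs :
  path conf_step x cs -> all (fun y : Q * int => 0 < y.2) (belast x cs).
Proof. by elim: cs x => //= y cs IH x /andP [/andP [-> _] /IH ->]. Qed.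

Lemma hit_ge_run q cs s i : path conf_step (s, i) cs -> last (s, i) cs = (q, 0) ->
  xmin A ^+ size cs <= hit A q (size cs) s i.
Proof.
elim: cs s i => [|[t j] cs IH] s i /=; first by move=> _ [-> ->]; rewrite !eqxx expr0.
case/andP => /andP [/= i0 Pst] run_cs /(IH _ _ run_cs) Hcs; rewrite i0.
have cm : j - i \in pos_moves by rewrite (Pp_supp (lt0r_neq0 Pst)).
rewrite (bigD1_seq (j - i)) //= (bigD1 t) //= (_ : i + (j - i) = j); last by lia.
apply: le_trans (_ : Pp A s (j - i) t * hit A q (size cs) t j <= _).
  by rewrite exprS ler_pM ?exprn_ge0 ?(ltW (xmin_gt0 A)) ?xmin_le_Pp.
rewrite -addrA lerDl addr_ge0 //.
  by apply: sumr_ge0 => t' _; rewrite mulr_ge0 ?Pp_ge0 ?hit_ge0.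
by apply: sumr_ge0 => c _; apply: sumr_ge0 => t' _; rewrite mulr_ge0 ?Pp_ge0 ?hit_ge0.
Qed.

(* The shortened run visits pairwise distinct configurations (t, j) with
   1 <= j <= h before its last step, hence has at most #|Q| * h steps. *)
Lemma descent_short_hit p q n h : descent p q n h ->
  exists m, (m <= #|Q| * h)%N /\ xmin A ^+ m <= hit A q m p 1.
Proof.
move=> D; have h0 := descent_height_gt0 D.
have [cs [_ run_cs last_cs all_cs]] := descent_run D (ltr01 : (0 : int) < 1).
rewrite subrr in last_cs.
case: (shortenP run_cs) last_cs => cs' run' uniq' sub' last'.
exists (size cs'); split; last exact: hit_ge_run.
clear D; case: h h0 all_cs => // h _ all_cs.
rewrite lastI rcons_uniq in uniq'; case/andP: uniq' => _ uniqL.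
have posL := allP (conf_step_path_pos run').
have boundL y : y \in belast (p, 1) cs' -> y.2 <= h.+1%:Z.
  move=> /mem_belast; rewrite inE => /orP [/eqP -> //|/sub' /(allP all_cs) /=]; lia.
pose f (y : Q * int) : Q * 'I_h.+1 := (y.1, inord `|y.2 - 1|%N).
have f_inj : {in belast (p, 1) cs' &, injective f}.
  move=> [y1 y2] [z1 z2] yL zL [-> E2]; congr pair.
  have := posL _ yL; have := posL _ zL; have := boundL _ yL; have := boundL _ zL => /= *.
  have : `|y2 - 1|%N = `|z2 - 1|%N.
    by rewrite -(@inordK h `|y2 - 1|%N) ?E2 ?inordK //; lia.
  lia.
have := max_card (mem (map f (belast (p, 1) cs'))).
rewrite (card_uniqP _); last by rewrite map_inj_in_uniq.
by rewrite size_map size_belast card_prod card_ord.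
Qed.

Lemma hit_gt0_short p q n : 0 < hit A q n p 1 ->
  exists m, xmin A ^+ (#|Q| ^ 3) <= hit A q m p 1.
Proof.
move=> /hit_descent Dn.
have exD : exists n, `[< exists h, descent p q n h >].
  by have [h ?] := Dn; exists n; apply/asboolP; exists h.
case: (ex_minnP exD) => n0 /asboolP [h D] n0_min.
have [h' D' h'_le] : exists2 h', descent p q n0 h' & (h' <= #|descent_pairs n0|)%N.
  apply: (shortest_descent_height D) => m g lt Dm.
  by have := n0_min m (asboolT (ex_intro _ g Dm)); rewrite leqNgt lt.
have [m [m_le hit_ge]] := descent_short_hit D'.
exists m; apply: le_trans hit_ge; rewrite ler_wiXn2l ?(ltW (xmin_gt0 A)) ?xmin_le1 //.
by rewrite expnS (leq_trans m_le) // leq_mul2l (leq_trans h'_le) ?card_descent_pairs ?orbT.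
Qed.

End Descents.

Local Open Scope ereal_scope.

Section Bounds.
Variables (R : realType) (Q : finType) (A : pOC Q) (p q : Q).

Lemma prob_down_gt0_hit : 0 < @prob_down Q A R p q -> exists n, (0 < hit A q n p 1)%R.
Proof.
move=> Ppos; case: (pselect (exists n, (0 < hit A q n p 1)%R)) => // nohit.
move: Ppos; rewrite /prob_down eseries0 ?ltxx // => n _ _.
suff -> : hit A q n p 1 = 0%R by rewrite rmorph0.
by apply/eqP; rewrite eq_le hit_ge0 andbT leNgt; apply/negP => hn; apply: nohit; exists n.
Qed.

Lemma prob_down_ge : 0 < @prob_down Q A R p q ->
  (ratr (xmin A) ^+ (#|Q| ^ 3))%:E <= @prob_down Q A R p q.
Proof.
move=> /prob_down_gt0_hit [n /hit_gt0_short [m hit_ge]].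
apply: le_trans (nneseries_ge_term m _); last by move=> k; rewrite ler0q hit_ge0.
by rewrite lee_fin -rmorphXn ler_rat.
Qed.

Lemma prob_down_le1 : @prob_down Q A R p q <= 1.
Proof.
apply: nneseries_le_bound => [n|N]; first by rewrite ler0q hit_ge0.
by rewrite -rmorph_sum -(rmorph1 (@ratr R)) ler_rat sum_hit_le1.
Qed.

Lemma time_series_le : ~~ in_BSCC A q ->
  \sum_(0 <= n <oo) ((n%:R * ratr (hit A q n p 1)) : R)%:E
    <= (#|Q|%:R / ratr (xmin A) ^+ #|Q|)%:E.
Proof.
move=> nb; apply: nneseries_le_bound => [n|N].
  by rewrite mulr_ge0 ?ler0q ?hit_ge0.
under eq_bigr do rewrite -(ratr_nat R) -rmorphM.
rewrite -rmorph_sum -(ratr_nat R) -rmorphXn -fmorph_div ler_rat.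
exact: sum_time_hit_le.
Qed.

Lemma time_series_ge0 :
  0 <= \sum_(0 <= n <oo) ((n%:R * ratr (hit A q n p 1)) : R)%:E.
Proof. by apply: nneseries_ge0 => n _ _; rewrite lee_fin mulr_ge0 ?ler0q ?hit_ge0. Qed.

End Bounds.

Local Close Scope ereal_scope.
Unset Implicit Arguments.

Theorem mainTheorem4 (R : realType) (Q : finType) (A : pOC Q) (p q : Q) :
  (0 < @prob_down Q A R p q)%E ->
  ~~ in_BSCC A q ->
  (@exp_down Q A R p q <=
     ((5 * #|Q|%:R) / ratr (xmin A) ^+ (#|Q| + #|Q| ^ 3))%:E)%E.
Proof.
move=> Ppos nb; have S_le := time_series_le R p nb; have P_ge := prob_down_ge Ppos.
have S0 := time_series_ge0 R A p q.
have Sfin := fineK_bounded S0 S_le.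
have Pfin := fineK_bounded (ltW Ppos) (prob_down_le1 R A p q).
rewrite -Sfin lee_fin in S_le; rewrite -Pfin lee_fin in P_ge.
rewrite /exp_down -Sfin -EFinM lee_fin.
have y0 : 0 < ratr (xmin A) :> R by rewrite ltr0q xmin_gt0.
apply: le_trans (ler_pdivr_expD y0 (fine_ge0 S0) S_le P_ge) _.
by rewrite ler_wpM2r ?invr_ge0 ?exprn_ge0 ?(ltW y0) // ler_peMl // ler1n.
Qed.
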